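(* Let $A=\begin{bmatrix} 0 & J_{k_1,k_2} & X_1\\ J_{k_1,k_2} & 0 & X_2\\ X_3 & X_4 & Y\end{bmatrix}$ and $B=\begin{bmatrix} J_{k_1,k_2} & 0 & X_1\\ 0 & J_{k_1,k_2} & X_2\\ X_3 & X_4 & Y\end{bmatrix}$ be Gram mates, where $k_1,k_2>0$, $\mathbf{1}^TX_1=\mathbf{1}^TX_2$ and $X_3\mathbf{1}=X_4\mathbf{1}$. Let $R$ and $S$ be the row and column sum vectors of $A$, and conformally partitioned with the rows and the columns of $A$ as $R=(R_1,R_2,R_3)$ and $S=(S_1,S_2,S_3)$, respectively. Suppose that for $i=1,2$, the set of all entries of $R_i$ (resp. $S_i$) does not have any element in common with that of $R_3$ (resp. $S_3$). Then, $A$ is isomorphic to $B$ if and only if the remaining matrix $Y$ is fixable.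
   Context: $J_{p,q}$ is the $p\times q$ all-ones matrix. Two $(0,1)$ matrices $A\neq B$ are Gram mates if $AA^T=BB^T$ and $A^TA=B^TB$; isomorphic if $B=PAQ$ for permutation matrices $P,Q$. For $(0,1)$ matrices $Z_1,Z_2$ of equal size, $\mathcal R_{Z_1,Z_2}$ is the set of triples $(P_1,P_2,Q)$ of permutation matrices with $Z_2=P_1Z_1Q$ and $Z_1=P_2Z_2Q$, and $\mathcal L_{Z_1,Z_2}$ is the set of triples $(P,Q_1,Q_2)$ of permutation matrices with $Z_1=PZ_1Q_1$ and $Z_2=PZ_2Q_2$. $Y$ is fixable if there exist permutation matrices $P,Q$ with $Y=PYQ$ such that either (i) $(P_1,P_2,Q)\in\mathcal R_{X_1,X_2}$ and $(P,Q_3,Q_4)\in\mathcal L_{X_3,X_4}$ for some $P_1,P_2,Q_3,Q_4$, or (ii) $(Q_3,Q_4,P^T)\in\mathcal R_{X_3^T,X_4^T}$ and $(Q^T,P_1,P_2)\in\mathcal L_{X_1^T,X_2^T}$ for some $P_1,P_2,Q_3,Q_4$. *)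

From HB Require Import structures.
From mathcomp Require Import all_boot all_order all_algebra all_fingroup.
Set Implicit Arguments. Unset Strict Implicit. Unset Printing Implicit Defensive.
Import GRing.Theory Num.Theory.
Local Open Scope ring_scope.

(* (0,1) matrices are represented as integer matrices with entries in {0,1}. *)
Definition is01 p q (A : 'M[int]_(p, q)) : Prop :=
  forall i j, A i j = 0 \/ A i j = 1.

Definition Jmx p q : 'M[int]_(p, q) := const_mx 1.

Definition gram_mates p q (A B : 'M[int]_(p, q)) : Prop :=
  [/\ is01 A, is01 B, A <> B, A *m A^T = B *m B^T & A^T *m A = B^T *m B].

Definition mx_isomorphic p q (A B : 'M[int]_(p, q)) : Prop :=
  exists (P : 'M[int]_p) (Q : 'M[int]_q),
    [/\ is_perm_mx P, is_perm_mx Q & B = P *m A *m Q].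

Definition inR p q (Z1 Z2 : 'M[int]_(p, q)) (P1 P2 : 'M[int]_p) (Q : 'M[int]_q)
  : Prop :=
  [/\ is_perm_mx P1, is_perm_mx P2, is_perm_mx Q,
      Z2 = P1 *m Z1 *m Q & Z1 = P2 *m Z2 *m Q].

Definition inL p q (Z1 Z2 : 'M[int]_(p, q)) (P : 'M[int]_p) (Q1 Q2 : 'M[int]_q)
  : Prop :=
  [/\ is_perm_mx P, is_perm_mx Q1, is_perm_mx Q2,
      Z1 = P *m Z1 *m Q1 & Z2 = P *m Z2 *m Q2].

Definition fixable k1 k2 m n (X1 X2 : 'M[int]_(k1, n)) (X3 X4 : 'M[int]_(m, k2))
  (Y : 'M[int]_(m, n)) : Prop :=
  exists (P : 'M[int]_m) (Q : 'M[int]_n),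
    [/\ is_perm_mx P, is_perm_mx Q, Y = P *m Y *m Q &
      (exists P1 P2 Q3 Q4, inR X1 X2 P1 P2 Q /\ inL X3 X4 P Q3 Q4) \/
      (exists P1 P2 Q3 Q4, inR X3^T X4^T Q3 Q4 P^T /\ inL X1^T X2^T Q^T P1 P2)].

Definition matA k1 k2 m n (X1 X2 : 'M[int]_(k1, n)) (X3 X4 : 'M[int]_(m, k2))
  (Y : 'M[int]_(m, n)) : 'M[int]_((k1 + k1) + m, (k2 + k2) + n) :=
  block_mx (block_mx 0 (Jmx k1 k2) (Jmx k1 k2) 0) (col_mx X1 X2)
           (row_mx X3 X4) Y.

Definition matB k1 k2 m n (X1 X2 : 'M[int]_(k1, n)) (X3 X4 : 'M[int]_(m, k2))
  (Y : 'M[int]_(m, n)) : 'M[int]_((k1 + k1) + m, (k2 + k2) + n) :=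
  block_mx (block_mx (Jmx k1 k2) 0 0 (Jmx k1 k2)) (col_mx X1 X2)
           (row_mx X3 X4) Y.

Definition rsum p q (A : 'M[int]_(p, q)) (i : 'I_p) : int := \sum_j A i j.
Definition csum p q (A : 'M[int]_(p, q)) (j : 'I_q) : int := \sum_i A i j.

From mathcomp Require Import all_boot all_order all_algebra all_fingroup.
Local Open Scope ring_scope.
Set Implicit Arguments. Unset Strict Implicit.

(* Index the rows and columns of A and B by two top blocks followed by a bottom
   block.  B has the same row and column sums as A, and an isomorphism
   B = P A Q preserves them, so by the separation hypotheses P and Q map top
   indices to top indices and bottom ones to bottom ones.  On the top blocks
   A x w = [side x != side w] while B x w = [side x == side w], so exactly one
   of P, Q exchanges the two top blocks and the other preserves them.  The
   restrictions of P and Q to the blocks are then precisely the permutations of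
   alternative (i) (rows exchanged) or (ii) (columns exchanged) in the
   definition of fixability; conversely such block permutations assemble into
   an isomorphism. *)

Lemma perm_restrict (T U : finType) (s : {perm U}) (e1 e2 : T -> U) :
  injective e1 -> injective e2 -> (forall x, exists y, s (e1 x) = e2 y) ->
  exists r : {perm T}, forall x, s (e1 x) = e2 (r x).
Proof.
move=> e1_inj e2_inj s_e12; have [f sf] := fin_all_exists s_e12.
have f_inj : injective f.
  by move=> x y fxy; apply/e1_inj/(@perm_inj _ s); rewrite sf fxy -sf.
by exists (perm f_inj) => x; rewrite permE.
Qed.

Lemma mul_perm_mxE (R : pzRingType) p q (s : 'S_p) (t : 'S_q) (M : 'M[R]_(p, q))
    i j :
  (perm_mx s *m M *m perm_mx t) i j = M (s i) (t^-1%g j).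
Proof. by rewrite -row_permE -{1}[t]invgK -col_permE !mxE. Qed.

Lemma eq_mul_perm_mxP (R : pzRingType) p q (s : 'S_p) (t : 'S_q)
    (M N : 'M[R]_(p, q)) :
  N = perm_mx s *m M *m perm_mx t <-> forall i j, N i j = M (s i) (t^-1%g j).
Proof.
split=> [-> i j | eqN]; first exact: mul_perm_mxE.
by apply/matrixP => i j; rewrite mul_perm_mxE.
Qed.

Lemma eq_mul_perm_mx_trP (R : pzRingType) p q (s : 'S_q) (t : 'S_p)
    (M N : 'M[R]_(p, q)) :
  N^T = perm_mx s *m M^T *m perm_mx t <-> forall i j, N i j = M (t^-1%g i) (s j).
Proof.
split=> [/eq_mul_perm_mxP eqN i j | eqN]; first by move: (eqN j i); rewrite !mxE.
by apply/eq_mul_perm_mxP => i j; rewrite !mxE eqN.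
Qed.

Lemma mx_isomorphicP p q (A B : 'M[int]_(p, q)) :
  mx_isomorphic A B <-> exists (s : 'S_p) (u : 'S_q), forall x w, B x w = A (s x) (u w).
Proof.
split=> [[_ [_ [/is_perm_mxP[s ->] /is_perm_mxP[t ->] ->]]] | [s [u eqB]]].
  by exists s, t^-1%g => x w; rewrite mul_perm_mxE.
exists (perm_mx s), (perm_mx u^-1); split; try exact: perm_mx_is_perm.
by apply/eq_mul_perm_mxP => x w; rewrite invgK.
Qed.

Lemma rsum_reindex p q (M N : 'M[int]_(p, q)) (s : 'S_p) (u : 'S_q) x :
  (forall x w, N x w = M (s x) (u w)) -> rsum N x = rsum M (s x).
Proof.
move=> eqN; rewrite /rsum [RHS](reindex_inj (@perm_inj _ u)).
by apply: eq_bigr => w _; apply: eqN.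
Qed.

Lemma csum_reindex p q (M N : 'M[int]_(p, q)) (s : 'S_p) (u : 'S_q) w :
  (forall x w, N x w = M (s x) (u w)) -> csum N w = csum M (u w).
Proof.
move=> eqN; rewrite /csum [RHS](reindex_inj (@perm_inj _ s)).
by apply: eq_bigr => x _; apply: eqN.
Qed.

Lemma flip_flags (I J : Type) (i0 : I) (j0 : J) (b b' : I -> bool) (c c' : J -> bool) :
  (forall i j, (b i == c j) = (b' i != c' j)) ->
  exists sw, (forall i, b' i = b i (+) sw) /\ (forall j, c' j = c j (+) ~~ sw).
Proof.
move=> bc; exists (b' i0 (+) b i0); split=> [i|j].
  move: (bc i j0) (bc i0 j0); case: (b i); case: (b' i); case: (b i0);
  by case: (b' i0); case: (c j0); case: (c' j0).
by move: (bc i0 j); case: (c j); case: (c' j); case: (b i0); case: (b' i0).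
Qed.

Lemma split_lshift m n (i : 'I_m) : split (lshift n i) = inl i.
Proof. exact: (unsplitK (inl _ i)). Qed.

Lemma split_rshift m n (i : 'I_n) : split (rshift m i) = inr i.
Proof. exact: (unsplitK (inr _ i)). Qed.

Section BlockIndices.

Variables k m : nat.
Local Notation I := 'I_((k + k) + m).

Definition top_ord (b : bool) (i : 'I_k) : I :=
  lshift m (if b then rshift k i else lshift k i).
Definition bot_ord (l : 'I_m) : I := rshift (k + k) l.

Variant block_spec : I -> Type :=
  | TopOrd b i : block_spec (top_ord b i)
  | BotOrd l : block_spec (bot_ord l).

Lemma blockP x : block_spec x.
Proof.
rewrite -(splitK x); case: (split x) => [y|l] /=; last exact: BotOrd.
rewrite -(splitK y); case: (split y) => i; [exact: (TopOrd false) | exact: (TopOrd true)].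
Qed.

Lemma top_ord_inj b : injective (top_ord b).
Proof. by case: b => i j /lshift_inj; [move/rshift_inj | move/lshift_inj]. Qed.

Lemma bot_ord_inj : injective bot_ord.
Proof. exact: rshift_inj. Qed.

Definition is_top (x : I) := (x < k + k)%N.
(* Which of the two top blocks contains [x]; junk ([true]) on the bottom block. *)
Definition top_side (x : I) := (k <= x)%N.

Lemma is_top_top b i : is_top (top_ord b i).
Proof. by case: b; rewrite /is_top /= ?ltn_add2l // ltn_addr. Qed.

Lemma is_top_bot l : is_top (bot_ord l) = false.
Proof. by rewrite /is_top /= ltnNge leq_addr. Qed.

Lemma top_side_top b i : top_side (top_ord b i) = b.
Proof. by case: b; rewrite /top_side /= ?leq_addr // leqNgt ltn_ord. Qed.

Lemma is_top_perm (T : eqType) (f : I -> T) (s : {perm I}) :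
  (forall x, f (s x) = f x) -> (forall b i l, f (top_ord b i) != f (bot_ord l)) ->
  forall x, is_top (s x) = is_top x.
Proof.
move=> fs sep x; move: (fs x).
case: (blockP (s x)) => [c j|l']; case: (blockP x) => [b i|l];
  rewrite ?is_top_top ?is_top_bot // => fsx.
- by move: (sep c j l); rewrite fsx eqxx.
- by move: (sep b i l'); rewrite fsx eqxx.
Qed.

Definition blockwise (sw : bool) (a : bool -> 'S_k) (p : 'S_m) (s : {perm I}) :=
  (forall b i, s (top_ord b i) = top_ord (b (+) sw) (a b i)) /\
  (forall l, s (bot_ord l) = bot_ord (p l)).

Definition block_fun sw (a : bool -> 'S_k) (p : 'S_m) (x : I) : I :=
  match split x with
  | inl y => match split y with
             | inl i => top_ord sw (a false i)
             | inr i => top_ord (~~ sw) (a true i)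
             end
  | inr l => bot_ord (p l)
  end.

Lemma block_fun_top sw a p b i :
  block_fun sw a p (top_ord b i) = top_ord (b (+) sw) (a b i).
Proof.
by case: b; rewrite /block_fun /top_ord split_lshift ?split_lshift ?split_rshift.
Qed.

Lemma block_fun_bot sw a p l : block_fun sw a p (bot_ord l) = bot_ord (p l).
Proof. by rewrite /block_fun /bot_ord split_rshift. Qed.

Lemma block_funK sw a p :
  cancel (block_fun sw a p) (block_fun sw (fun b => (a (b (+) sw))^-1%g) p^-1%g).
Proof.
move=> x; case: (blockP x) => [b i|l]; rewrite ?block_fun_top ?block_fun_bot ?permK //.
by rewrite addbK permK.
Qed.

Definition block_perm sw a p : {perm I} := perm (can_inj (block_funK sw a p)).

Lemma block_perm_blockwise sw a p : blockwise sw a p (block_perm sw a p).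
Proof. by split=> *; rewrite permE ?block_fun_top ?block_fun_bot. Qed.

Lemma blockwise_of_sides sw (s : {perm I}) :
  (forall x, is_top (s x) = is_top x) ->
  (forall b i, top_side (s (top_ord b i)) = b (+) sw) ->
  exists a p, blockwise sw a p s.
Proof.
move=> s_top s_side.
have s_bot l : exists l', s (bot_ord l) = bot_ord l'.
  move: (s_top (bot_ord l)); rewrite is_top_bot.
  by case: (blockP (s (bot_ord l))) => [b i|l']; rewrite ?is_top_top //; exists l'.
have /fin_all_exists[a sa] b :
    exists r : 'S_k, forall i, s (top_ord b i) = top_ord (b (+) sw) (r i).
  apply: perm_restrict; [exact: top_ord_inj | exact: top_ord_inj | move=> i].
  move: (s_top (top_ord b i)) (s_side b i); rewrite is_top_top.
  case: (blockP (s (top_ord b i))) => [c j|l]; rewrite ?is_top_bot //.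
  by rewrite top_side_top => _ <-; exists j.
have [p sp] := perm_restrict bot_ord_inj bot_ord_inj s_bot.
by exists a, p.
Qed.

End BlockIndices.

Arguments top_ord {k m}.
Arguments bot_ord {k m}.

Section Blocks.

Variables (k1 k2 m n : nat) (X1 X2 : 'M[int]_(k1, n)) (X3 X4 : 'M[int]_(m, k2)).
Variable Y : 'M[int]_(m, n).

Local Notation A := (matA X1 X2 X3 X4 Y).
Local Notation B := (matB X1 X2 X3 X4 Y).
Local Notation XR b := (if b then X2 else X1).
Local Notation XB c := (if c then X4 else X3).

Lemma matA_tt b i c j : A (top_ord b i) (top_ord c j) = (b != c)%:R.
Proof.
by case: b; case: c; rewrite /matA /top_ord /=
  ?(block_mxEul, block_mxEur, block_mxEdl, block_mxEdr) /Jmx mxE.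
Qed.

Lemma matB_tt b i c j : B (top_ord b i) (top_ord c j) = (b == c)%:R.
Proof.
by case: b; case: c; rewrite /matB /top_ord /=
  ?(block_mxEul, block_mxEur, block_mxEdl, block_mxEdr) /Jmx mxE.
Qed.

Lemma matA_tb b i j : A (top_ord b i) (bot_ord j) = XR b i j.
Proof. by case: b; rewrite /matA /top_ord /bot_ord /= block_mxEur ?col_mxEu ?col_mxEd. Qed.

Lemma matB_tb b i j : B (top_ord b i) (bot_ord j) = XR b i j.
Proof. by case: b; rewrite /matB /top_ord /bot_ord /= block_mxEur ?col_mxEu ?col_mxEd. Qed.

Lemma matA_bt l c j : A (bot_ord l) (top_ord c j) = XB c l j.
Proof. by case: c; rewrite /matA /top_ord /bot_ord /= block_mxEdl ?row_mxEl ?row_mxEr. Qed.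

Lemma matB_bt l c j : B (bot_ord l) (top_ord c j) = XB c l j.
Proof. by case: c; rewrite /matB /top_ord /bot_ord /= block_mxEdl ?row_mxEl ?row_mxEr. Qed.

Lemma matA_bb l j : A (bot_ord l) (bot_ord j) = Y l j.
Proof. exact: block_mxEdr. Qed.

Lemma matB_bb l j : B (bot_ord l) (bot_ord j) = Y l j.
Proof. exact: block_mxEdr. Qed.

Lemma rsum_matB x : rsum B x = rsum A x.
Proof.
pose swap := block_perm true (fun=> 1%g : 'S_k2) (1%g : 'S_n).
have [swap_top swap_bot] : blockwise true (fun=> 1%g) 1%g swap.
  exact: block_perm_blockwise.
case: (blockP x) => [b i|l].
  rewrite /rsum [RHS](reindex_inj (@perm_inj _ swap)).
  apply: eq_bigr => w _; case: (blockP w) => [c j|j].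
    by rewrite swap_top matA_tt matB_tt addbT; case: b; case: c.
  by rewrite swap_bot perm1 matA_tb matB_tb.
apply: eq_bigr => w _; case: (blockP w) => [c j|j].
  by rewrite matA_bt matB_bt.
by rewrite matA_bb matB_bb.
Qed.

Lemma csum_matB w : csum B w = csum A w.
Proof.
pose swap := block_perm true (fun=> 1%g : 'S_k1) (1%g : 'S_m).
have [swap_top swap_bot] : blockwise true (fun=> 1%g) 1%g swap.
  exact: block_perm_blockwise.
case: (blockP w) => [c j|j].
  rewrite /csum [RHS](reindex_inj (@perm_inj _ swap)).
  apply: eq_bigr => x _; case: (blockP x) => [b i|l].
    by rewrite swap_top matA_tt matB_tt addbT; case: b; case: c.
  by rewrite swap_bot perm1 matA_bt matB_bt.
apply: eq_bigr => x _; case: (blockP x) => [b i|l].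
  by rewrite matA_tb matB_tb.
by rewrite matA_bb matB_bb.
Qed.

Lemma top_sides_flip (s : 'S_((k1 + k1) + m)) (u : 'S_((k2 + k2) + n)) :
  (0 < k1)%N -> (0 < k2)%N ->
  (forall x, is_top (s x) = is_top x) -> (forall w, is_top (u w) = is_top w) ->
  (forall x w, B x w = A (s x) (u w)) ->
  exists sw, (forall b i, top_side (s (top_ord b i)) = b (+) sw) /\
             (forall c j, top_side (u (top_ord c j)) = c (+) ~~ sw).
Proof.
move=> k1_gt0 k2_gt0 s_top u_top eqB.
have side_eq b i c j :
    (b == c) = (top_side (s (top_ord b i)) != top_side (u (top_ord c j))).
  move: (eqB (top_ord b i) (top_ord c j)) (s_top (top_ord b i)) (u_top (top_ord c j)).
  case: (blockP (s (top_ord b i))) => [b' i'|l];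
  case: (blockP (u (top_ord c j))) => [c' j'|l'];
    rewrite ?is_top_top ?is_top_bot // matA_tt matB_tt !top_side_top.
  by case: (b == c); case: (b' != c').
have [sw [s_side u_side]] := flip_flags (false, Ordinal k1_gt0) (false, Ordinal k2_gt0)
  (fun x y => side_eq x.1 x.2 y.1 y.2).
by exists sw; split=> [b i|c j]; [exact: s_side (b, i) | exact: u_side (c, j)].
Qed.

Lemma blockwise_of_iso (s : 'S_((k1 + k1) + m)) (u : 'S_((k2 + k2) + n)) :
  (0 < k1)%N -> (0 < k2)%N ->
  (forall b i l, rsum A (top_ord b i) != rsum A (bot_ord l)) ->
  (forall c j l, csum A (top_ord c j) != csum A (bot_ord l)) ->
  (forall x w, B x w = A (s x) (u w)) ->
  exists sw a p c q, blockwise sw a p s /\ blockwise (~~ sw) c q u.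
Proof.
move=> k1_gt0 k2_gt0 rsep csep eqB.
have rsum_s x : rsum A (s x) = rsum A x by rewrite -(rsum_reindex x eqB) rsum_matB.
have csum_u w : csum A (u w) = csum A w by rewrite -(csum_reindex w eqB) csum_matB.
have s_top := is_top_perm rsum_s rsep.
have u_top := is_top_perm csum_u csep.
have [sw [s_side u_side]] := top_sides_flip k1_gt0 k2_gt0 s_top u_top eqB.
have [a [p s_blocks]] := blockwise_of_sides s_top s_side.
have [c [q u_blocks]] := blockwise_of_sides u_top u_side.
by exists sw, a, p, c, q.
Qed.

(* [sw = true] is alternative (i) of fixability, [sw = false] alternative (ii). *)
Definition block_iso sw (a : bool -> 'S_k1) (p : 'S_m) (c : bool -> 'S_k2) (q : 'S_n) :=
  [/\ forall b i j, XR b i j = XR (b (+) sw) (a b i) (q j),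
      forall d l j, XB d l j = XB (d (+) ~~ sw) (p l) (c d j)
    & forall l j, Y l j = Y (p l) (q j)].

Lemma block_isoP sw a p c q (s : 'S_((k1 + k1) + m)) (u : 'S_((k2 + k2) + n)) :
  blockwise sw a p s -> blockwise (~~ sw) c q u ->
  (forall x w, B x w = A (s x) (u w)) <-> block_iso sw a p c q.
Proof.
move=> [s_top s_bot] [u_top u_bot]; split=> [eqB | [eqXR eqXB eqY] x w].
  split=> [b i j|d l j|l j].
  - by move: (eqB (top_ord b i) (bot_ord j)); rewrite s_top u_bot matA_tb matB_tb.
  - by move: (eqB (bot_ord l) (top_ord d j)); rewrite s_bot u_top matA_bt matB_bt.
  - by move: (eqB (bot_ord l) (bot_ord j)); rewrite s_bot u_bot matA_bb matB_bb.
case: (blockP x) => [b i|l]; case: (blockP w) => [d j|j];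
  rewrite ?s_top ?s_bot ?u_top ?u_bot.
- by rewrite matA_tt matB_tt; case: b; case: d; case: (sw).
- by rewrite matA_tb matB_tb.
- by rewrite matA_bt matB_bt.
- by rewrite matA_bb matB_bb.
Qed.

Lemma fixable_block_iso :
  fixable X1 X2 X3 X4 Y <-> exists sw a p c q, block_iso sw a p c q.
Proof.
split=> [[_ [_ [/is_perm_mxP[p ->] /is_perm_mxP[q ->]]]] |
          [sw [a [p [c [q [eqXR eqXB eqY]]]]]]].
  rewrite !tr_perm_mx => /eq_mul_perm_mxP eqY [fix_rows | fix_cols].
    case: fix_rows => _ [_ [_ [_ [[/is_perm_mxP[a1 ->] /is_perm_mxP[a0 ->] _
      /eq_mul_perm_mxP eqX2 /eq_mul_perm_mxP eqX1]
      [_ /is_perm_mxP[c0 ->] /is_perm_mxP[c1 ->]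
      /eq_mul_perm_mxP eqX3 /eq_mul_perm_mxP eqX4]]]]].
    exists true, (fun b => if b then a1 else a0), p.
    exists (fun d => if d then c1^-1 else c0^-1)%g, q^-1%g.
    by split=> [[]|[]|];
      [exact: eqX2 | exact: eqX1 | exact: eqX4 | exact: eqX3 | exact: eqY].
  case: fix_cols => _ [_ [_ [_ [[/is_perm_mxP[c1 ->] /is_perm_mxP[c0 ->] _
    /eq_mul_perm_mx_trP eqX4 /eq_mul_perm_mx_trP eqX3]
    [_ /is_perm_mxP[a0 ->] /is_perm_mxP[a1 ->]
    /eq_mul_perm_mx_trP eqX1 /eq_mul_perm_mx_trP eqX2]]]]].
  exists false, (fun b => if b then a1^-1 else a0^-1)%g, p.
  exists (fun d => if d then c1 else c0), q^-1%g.
  rewrite invgK in eqX3 eqX4.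
  by split=> [[]|[]|];
    [exact: eqX2 | exact: eqX1 | exact: eqX4 | exact: eqX3 | exact: eqY].
exists (perm_mx p), (perm_mx q^-1); split; try exact: perm_mx_is_perm.
  by apply/eq_mul_perm_mxP => l j; rewrite invgK.
case: sw eqXR eqXB => eqXR eqXB; [left | right].
  exists (perm_mx (a true)), (perm_mx (a false)).
  exists (perm_mx (c false)^-1), (perm_mx (c true)^-1).
  split; split; try exact: perm_mx_is_perm;
    apply/eq_mul_perm_mxP => i j; rewrite ?invgK;
    [exact: (eqXR true) | exact: (eqXR false) | exact: (eqXB false) | exact: (eqXB true)].
exists (perm_mx (a false)^-1), (perm_mx (a true)^-1).
exists (perm_mx (c true)), (perm_mx (c false)).
rewrite !tr_perm_mx !invgK.
split; split; try exact: perm_mx_is_perm;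
  apply/eq_mul_perm_mx_trP => i j; rewrite ?invgK;
  [exact: (eqXB true) | exact: (eqXB false) | exact: (eqXR false) | exact: (eqXR true)].
Qed.

End Blocks.

Theorem proposition6p5 (k1 k2 m n : nat)
  (X1 X2 : 'M[int]_(k1, n)) (X3 X4 : 'M[int]_(m, k2)) (Y : 'M[int]_(m, n)) :
  (0 < k1)%N -> (0 < k2)%N ->
  gram_mates (matA X1 X2 X3 X4 Y) (matB X1 X2 X3 X4 Y) ->
  (forall j, csum X1 j = csum X2 j) ->
  (forall i, rsum X3 i = rsum X4 i) ->
  (* R_1, R_2 share no entry with R_3 *)
  (forall (i : 'I_k1) (l : 'I_m),
     rsum (matA X1 X2 X3 X4 Y) (lshift m (lshift k1 i))
       != rsum (matA X1 X2 X3 X4 Y) (rshift (k1 + k1) l)) ->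
  (forall (i : 'I_k1) (l : 'I_m),
     rsum (matA X1 X2 X3 X4 Y) (lshift m (rshift k1 i))
       != rsum (matA X1 X2 X3 X4 Y) (rshift (k1 + k1) l)) ->
  (* S_1, S_2 share no entry with S_3 *)
  (forall (j : 'I_k2) (l : 'I_n),
     csum (matA X1 X2 X3 X4 Y) (lshift n (lshift k2 j))
       != csum (matA X1 X2 X3 X4 Y) (rshift (k2 + k2) l)) ->
  (forall (j : 'I_k2) (l : 'I_n),
     csum (matA X1 X2 X3 X4 Y) (lshift n (rshift k2 j))
       != csum (matA X1 X2 X3 X4 Y) (rshift (k2 + k2) l)) ->
  (mx_isomorphic (matA X1 X2 X3 X4 Y) (matB X1 X2 X3 X4 Y)
   <-> fixable X1 X2 X3 X4 Y).
Proof.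
move=> k1_gt0 k2_gt0 _ _ _ rsep1 rsep2 csep1 csep2.
have rsep b i l : rsum (matA X1 X2 X3 X4 Y) (top_ord b i)
                   != rsum (matA X1 X2 X3 X4 Y) (bot_ord l).
  by case: b; [exact: rsep2 | exact: rsep1].
have csep c j l : csum (matA X1 X2 X3 X4 Y) (top_ord c j)
                   != csum (matA X1 X2 X3 X4 Y) (bot_ord l).
  by case: c; [exact: csep2 | exact: csep1].
split=> [/mx_isomorphicP[s [u eqB]] | /fixable_block_iso[sw [a [p [c [q iso]]]]]].
  have [sw [a [p [c [q [s_blocks u_blocks]]]]]] :=
    blockwise_of_iso k1_gt0 k2_gt0 rsep csep eqB.
  apply/fixable_block_iso; exists sw, a, p, c, q.
  exact: (block_isoP X1 X2 X3 X4 Y s_blocks u_blocks).1.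
apply/mx_isomorphicP; exists (block_perm sw a p), (block_perm (~~ sw) c q).
have iso_blocks := block_isoP X1 X2 X3 X4 Y
  (block_perm_blockwise sw a p) (block_perm_blockwise (~~ sw) c q).
exact: iso_blocks.2.
Qed.
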